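(* Let $\Phi$ be a finite-valued Young function with $\Phi(t)\neq0$ for $t>0$, and suppose $q_\Phi>1$. Then there is a strictly convex Young function which is equivalent to $\Phi$.
   Context: A Young function is a map $\Phi:[0,\infty)\to[0,\infty]$ which is convex, satisfies $\Phi(0)=0$ and $\lim_{t\to\infty}\Phi(t)=+\infty$. Two Young functions $\Phi_1,\Phi_2$ are equivalent if there is $C\ge1$ with $C^{-1}\Phi_2\le\Phi_1\le C\Phi_2$ on $[0,\infty)$. For a finite-valued Young function positive on $(0,\infty)$, $q_\Phi=\inf_{t>0}\frac{t\Phi'_+(t)}{\Phi(t)}$, where $\Phi'_+$ is the right derivative. *)

From Stdlib Require Import Reals.
From Coquelicot Require Import Coquelicot.
Open Scope R_scope.

Definition convex_nonneg (f : R -> R) : Prop :=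
  forall x y s, 0 <= x -> 0 <= y -> 0 <= s <= 1 ->
    f (s * x + (1 - s) * y) <= s * f x + (1 - s) * f y.

Definition strictly_convex_nonneg (f : R -> R) : Prop :=
  forall x y s, 0 <= x -> 0 <= y -> x <> y -> 0 < s < 1 ->
    f (s * x + (1 - s) * y) < s * f x + (1 - s) * f y.

(* A (finite-valued) Young function: only its values on [0,+oo) matter. *)
Definition young (f : R -> R) : Prop :=
  (forall t, 0 <= t -> 0 <= f t) /\
  convex_nonneg f /\
  f 0 = 0 /\
  is_lim f p_infty p_infty.

Definition young_equiv (f g : R -> R) : Prop :=
  exists C, 1 <= C /\
    forall t, 0 <= t -> g t / C <= f t /\ f t <= C * g t.

Definition is_right_deriv (f : R -> R) (t l : R) : Prop :=
  filterlim (fun h => (f (t + h) - f t) / h) (at_right 0) (locally l).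

Definition q_index (f : R -> R) : Rbar :=
  Glb_Rbar (fun x => exists t l, 0 < t /\ is_right_deriv f t l /\
                                  x = t * l / f t).

(* Let k(u) = 2u - 1 + 1/(u+1) = u + u^2/(u+1).  On [0, +oo) the function k
   is nondecreasing and strictly convex, k(0) = 0, and u <= k(u) <= 2u.  For a
   Young function Phi that vanishes only at 0, Psi = k o Phi is then:
   - a Young function (composition of a nondecreasing convex map with a convex
     one, squeezed between Phi and 2 Phi);
   - strictly convex, because Phi is strictly increasing on [0, +oo), so
     distinct points have distinct images, where k is strictly convex;
   - equivalent to Phi with constant 2.
   The file first proves the general facts about compositions k o f, then the
   properties of this particular k, and derives the theorem. *)

From Stdlib Require Import Reals Lra Psatz.
From Coquelicot Require Import Coquelicot.
Open Scope R_scope.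

(* Strict convexity on [0, +oo) implies convexity there: the cases excluded
   from the strict inequality (s = 0, s = 1 or x = y) are equalities. *)
Lemma strictly_convex_convex (k : R -> R) :
  strictly_convex_nonneg k -> convex_nonneg k.
Proof.
  intros Hk x y s Hx Hy Hs.
  destruct (Req_dec s 0) as [->|Hs0].
  { replace (0 * x + (1 - 0) * y) with y by ring. lra. }
  destruct (Req_dec s 1) as [->|Hs1].
  { replace (1 * x + (1 - 1) * y) with x by ring. lra. }
  destruct (Req_dec x y) as [->|Hxy].
  { replace (s * y + (1 - s) * y) with y by ring. lra. }
  left; apply Hk; auto; lra.
Qed.

Section Composition.

Variables (k f : R -> R).
Hypothesis f_nonneg : forall t, 0 <= t -> 0 <= f t.
Hypothesis f_convex : convex_nonneg f.
Hypothesis k_mono : forall a b, 0 <= a -> a <= b -> k a <= k b.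

Lemma comp_le_mix (x y s : R) : 0 <= x -> 0 <= y -> 0 <= s <= 1 ->
  k (f (s * x + (1 - s) * y)) <= k (s * f x + (1 - s) * f y).
Proof.
  intros Hx Hy Hs.
  apply k_mono; [apply f_nonneg; nra | apply f_convex; auto].
Qed.

Lemma comp_convex : convex_nonneg k -> convex_nonneg (fun t => k (f t)).
Proof.
  intros Hk x y s Hx Hy Hs.
  eapply Rle_trans; [apply comp_le_mix; auto|].
  apply Hk; auto.
Qed.

Lemma comp_strictly_convex :
  strictly_convex_nonneg k ->
  (forall x y, 0 <= x -> 0 <= y -> x <> y -> f x <> f y) ->
  strictly_convex_nonneg (fun t => k (f t)).
Proof.
  intros Hk Hinj x y s Hx Hy Hxy Hs.
  eapply Rle_lt_trans; [apply comp_le_mix; auto; lra|].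
  apply Hk; auto.
Qed.

Lemma young_comp :
  young f -> convex_nonneg k -> k 0 = 0 -> (forall u, 0 <= u -> u <= k u) ->
  young (fun t => k (f t)).
Proof.
  intros [_ [_ [Hf0 Hlim]]] Hk Hk0 Hkge.
  split; [|split; [|split]].
  - intros t Ht. pose proof (f_nonneg t Ht). pose proof (Hkge _ H). lra.
  - exact (comp_convex Hk).
  - simpl. rewrite Hf0. exact Hk0.
  - apply (is_lim_le_p_loc f); [|exact Hlim].
    exists 0. intros t Ht. apply Hkge, f_nonneg. lra.
Qed.

Lemma young_equiv_comp (C : R) :
  1 <= C -> (forall u, 0 <= u -> u <= k u <= C * u) ->
  young_equiv (fun t => k (f t)) f.
Proof.
  intros HC Hk. exists C. split; [exact HC|].
  intros t Ht. pose proof (f_nonneg t Ht) as Hft. pose proof (Hk _ Hft).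
  split; [|lra].
  apply (Rmult_le_reg_r C); [lra|].
  unfold Rdiv. rewrite Rmult_assoc, Rinv_l; nra.
Qed.

End Composition.

(* A Young function vanishing only at 0 is strictly increasing on [0, +oo):
   for 0 < x < y, convexity between 0 and y gives Phi x <= (x/y) Phi y. *)
Lemma young_strictly_increasing (Phi : R -> R) :
  young Phi -> (forall t, 0 < t -> Phi t <> 0) ->
  forall x y, 0 <= x -> x < y -> Phi x < Phi y.
Proof.
  intros [Hnn [Hcv [H0 _]]] Hpos x y Hx Hxy.
  assert (Hy : 0 < Phi y).
  { destruct (Hnn y ltac:(lra)); [lra | exfalso; apply (Hpos y); lra]. }
  destruct (Req_dec x 0) as [->|Hx0]; [rewrite H0; lra|].
  assert (Hr : 0 < x / y < 1).
  { split; [apply Rdiv_lt_0_compat; lra|].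
    apply (Rmult_lt_reg_r y); [lra|].
    unfold Rdiv. rewrite Rmult_assoc, Rinv_l; lra. }
  pose proof (Hcv y 0 (x / y) ltac:(lra) ltac:(lra) ltac:(lra)) as Hc.
  replace (x / y * y + (1 - x / y) * 0) with x in Hc by (field; lra).
  rewrite H0 in Hc. nra.
Qed.

Definition kfun (u : R) : R := 2 * u - 1 + / (u + 1).

Lemma kfun_0 : kfun 0 = 0.
Proof. unfold kfun. rewrite Rplus_0_l, Rinv_1. ring. Qed.

(* k(u) = u + u^2/(u+1), whence u <= k(u) <= 2u on [0, +oo). *)
Lemma kfun_bounds (u : R) : 0 <= u -> u <= kfun u <= 2 * u.
Proof.
  intros Hu. unfold kfun.
  replace (2 * u - 1 + / (u + 1)) with (u + u * u / (u + 1)) by (field; lra).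
  assert (0 <= u * u / (u + 1)).
  { apply Rmult_le_pos; [nra | left; apply Rinv_0_lt_compat; lra]. }
  assert (u * u / (u + 1) <= u).
  { apply (Rmult_le_reg_r (u + 1)); [lra|].
    unfold Rdiv. rewrite Rmult_assoc, Rinv_l; nra. }
  lra.
Qed.

(* k(w) - k(c) = (w - c)(2 - 1/((c+1)(w+1))) >= 0 for 0 <= c <= w. *)
Lemma kfun_mono (c w : R) : 0 <= c -> c <= w -> kfun c <= kfun w.
Proof.
  intros Hc Hw. unfold kfun.
  assert (E : / (c + 1) - / (w + 1) = (w - c) * / ((c + 1) * (w + 1)))
    by (field; lra).
  assert (Hinv : 0 <= / ((c + 1) * (w + 1)) <= 1).
  { split; [left; apply Rinv_0_lt_compat; nra|].
    rewrite <- Rinv_1. apply Rinv_le_contravar; nra. }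
  nra.
Qed.

(* Strict convexity of k: its convexity defect equals that of 1/(u+1),
   namely s(1-s)(a-b)^2 / ((a+1)(b+1)(m+1)) with m = sa + (1-s)b. *)
Lemma kfun_strictly_convex : strictly_convex_nonneg kfun.
Proof.
  intros a b s Ha Hb Hab Hs.
  set (m := s * a + (1 - s) * b).
  assert (Hm : 0 <= m) by (unfold m; nra).
  assert (E : s * kfun a + (1 - s) * kfun b - kfun m =
              s * (1 - s) * ((a - b) * (a - b)) * / ((a + 1) * (b + 1) * (m + 1))).
  { unfold kfun, m in *. field. lra. }
  assert (Hpos : 0 < s * (1 - s) * ((a - b) * (a - b)) *
                     / ((a + 1) * (b + 1) * (m + 1))).
  { apply Rmult_lt_0_compat; [apply Rmult_lt_0_compat; [nra|]|].
    - apply Rsqr_pos_lt. lra.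
    - apply Rinv_0_lt_compat. apply Rmult_lt_0_compat; [|lra]. nra. }
  lra.
Qed.

Theorem mainTheorem10 (Phi : R -> R) :
  young Phi ->
  (forall t, 0 < t -> Phi t <> 0) ->
  Rbar_lt (Finite 1) (q_index Phi) ->
  exists Psi : R -> R,
    young Psi /\ strictly_convex_nonneg Psi /\ young_equiv Psi Phi.
Proof.
  intros HY Hpos _.
  pose proof HY as [Hnn [Hcv _]].
  pose proof (strictly_convex_convex kfun kfun_strictly_convex) as Hkcv.
  assert (Hinj : forall x y, 0 <= x -> 0 <= y -> x <> y -> Phi x <> Phi y).
  { intros x y Hx Hy Hxy.
    destruct (Rlt_or_le x y) as [Hlt|Hle].
    - pose proof (young_strictly_increasing Phi HY Hpos x y Hx Hlt). lra.
    - pose proof (young_strictly_increasing Phi HY Hpos y x Hy ltac:(lra)). lra. }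
  exists (fun t => kfun (Phi t)). split; [|split].
  - apply young_comp; auto using kfun_mono, kfun_0.
    intros u Hu. apply kfun_bounds, Hu.
  - apply comp_strictly_convex; auto using kfun_mono, kfun_strictly_convex.
  - apply (young_equiv_comp kfun Phi Hnn 2); [lra | exact kfun_bounds].
Qed.
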